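(* Let $\mathcal X,\mathcal Y$ be finite sets, let $B_1,\dots,B_r$ be $\mathcal X\times\mathcal Y$ blocky matrices, and let $\Gamma:\{0,1\}^r\to\{0,1\}$ be any function. Then the Boolean matrix $F$ defined by $F(x,y)=\Gamma(B_1(x,y),\dots,B_r(x,y))$ for $(x,y)\in\mathcal X\times\mathcal Y$ satisfies $\|F\|_{\gamma_2}\le 3^r$.
   Context: A Boolean matrix $F\in\{0,1\}^{\mathcal X\times\mathcal Y}$ is called blocky if there exist pairwise disjoint sets $\mathcal X_i\subseteq\mathcal X$ and pairwise disjoint sets $\mathcal Y_i\subseteq\mathcal Y$ such that the support $\{(x,y):F(x,y)=1\}$ of $F$ equals $\bigcup_i \mathcal X_i\times\mathcal Y_i$. For a real $\mathcal X\times\mathcal Y$ matrix $A$, the $\gamma_2$-factorization norm $\|A\|_{\gamma_2}$ is the infimum of all $c$ such that there exist a positive integer $d$ and vectors $u_x,v_y\in\mathbb{R}^d$ with $\langle u_x,v_y\rangle=A(x,y)$ and $\|u_x\|_2\|v_y\|_2\le c$ for all $x\in\mathcal X,y\in\mathcal Y$. *)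

From HB Require Import structures.
From mathcomp Require Import all_boot all_order all_algebra.
From mathcomp Require Import boolp classical_sets reals.
Set Implicit Arguments. Unset Strict Implicit. Unset Printing Implicit Defensive.
Import Order.TTheory GRing.Theory Num.Theory.
Local Open Scope ring_scope.

Definition blocky (X Y : finType) (F : X -> Y -> bool) : Prop :=
  exists (k : nat) (Xs : 'I_k -> {set X}) (Ys : 'I_k -> {set Y}),
    (forall i j, i != j -> [disjoint Xs i & Xs j]) /\
    (forall i j, i != j -> [disjoint Ys i & Ys j]) /\
    (forall x y, F x y = [exists i, (x \in Xs i) && (y \in Ys i)]).

Definition dotv (R : realType) (d : nat) (u v : 'rV[R]_d) : R :=
  \sum_(i < d) u ord0 i * v ord0 i.
Definition norm2 (R : realType) (d : nat) (u : 'rV[R]_d) : R :=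
  Num.sqrt (dotv u u).

Local Open Scope classical_set_scope.

Definition gamma2 (R : realType) (X Y : finType) (A : X -> Y -> R) : R :=
  inf [set c : R | exists (d : nat) (u : X -> 'rV[R]_d) (v : Y -> 'rV[R]_d),
        (0 < d)%N /\
        (forall x y, dotv (u x) (v y) = A x y) /\
        (forall x y, norm2 (u x) * norm2 (v y) <= c)].

From HB Require Import structures.
From mathcomp Require Import all_boot all_order all_algebra.
From mathcomp Require Import boolp classical_sets reals.
Import Order.TTheory GRing.Theory Num.Theory.
Local Open Scope ring_scope.

(* A blocky matrix is <1[x in Xs i], 1[y in Ys i]>_i with rows of norm at most
   1, and 1 - B is the sum of two such factorizations.  The matrix F is the sum,
   over the a with Gamma a = 1, of the indicators prod_i [B_i = a_i], whose
   factors are B_i (bound 1) or 1 - B_i (bound 2).  Entrywise products tensor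
   the coordinates and multiply the bounds, sums concatenate them and add the
   bounds, so F gets a bound at most sum_a prod_i (a_i ? 1 : 2) = 3^r. *)

Set Implicit Arguments.
Unset Strict Implicit.

Lemma sum_pair_mul (R : pzSemiRingType) (I J : finType) (f : I -> R) (g : J -> R) :
  \sum_(k : I * J) f k.1 * g k.2 = (\sum_i f i) * (\sum_j g j).
Proof. by rewrite big_distrlr pair_big. Qed.

Lemma sum_indicator_unique (R : pzSemiRingType) (I : finType) (P : pred I) :
  (forall i j, P i -> P j -> i = j) ->
  \sum_i (P i : nat)%:R = ([exists i, P i] : nat)%:R :> R.
Proof.
move=> uniqP; case: (boolP [exists i, P i]) => [/existsP[i Pi] | /existsPn noP].
- rewrite (bigD1 i) //= Pi big1 ?addr0 // => j ji.
  by case Pj: (P j) => //; rewrite (uniqP _ _ Pi Pj) eqxx in ji.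
- by rewrite big1 // => i _; rewrite (negbTE (noP i)).
Qed.

Lemma sum_indicator_eq (R : pzSemiRingType) (I : finType) (P : pred I) (b : I) :
  \sum_(a | P a) ((a == b) : nat)%:R = (P b : nat)%:R :> R.
Proof.
case Pb: (P b).
- by rewrite (bigD1 b) //= eqxx big1 ?addr0 // => a /andP[_ /negbTE->].
- by rewrite big1 // => a Pa; case: eqP Pa => // ->; rewrite Pb.
Qed.

Lemma prod_literal_indicator (R : comPzRingType) (I : finType) (a : {ffun I -> bool})
    (b : I -> bool) :
  \prod_i (if a i then (b i : nat)%:R else 1 - (b i : nat)%:R)
    = ((a == finfun b) : nat)%:R :> R.
Proof.
under eq_bigr do rewrite -(ffunE b); move: (finfun b) => {}b.
have [<- | neq_ab] := eqVneq a b.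
  by rewrite big1 // => i _; case: (a i); rewrite ?subr0.
have [i ab_i] : exists i, a i != b i.
  apply/existsP; apply: contraNT neq_ab => /existsPn same.
  by apply/eqP/ffunP => i; apply/eqP/negPn.
rewrite (bigD1 i) //=.
by move: ab_i; case: (a i); case: (b i) => //= _; rewrite ?subrr mul0r.
Qed.

Lemma sum_prod_literal_cost (R : comPzSemiRingType) (I : finType) :
  \sum_(a : {ffun I -> bool}) \prod_i (if a i then 1 else 2) = 3 ^+ #|I| :> R.
Proof.
rewrite -(bigA_distr_bigA (fun _ (b : bool) => if b then 1 else 2 : R)) /=.
by under eq_bigr do rewrite big_bool; rewrite prodr_const.
Qed.

Lemma disjoint_family_unique (T I : finType) (A : I -> {set T}) :
  (forall i j, i != j -> [disjoint A i & A j]) ->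
  forall x i j, x \in A i -> x \in A j -> i = j.
Proof.
move=> disjA x i j xAi xAj; apply/eqP; apply: contraT => /disjA disj_ij.
by rewrite (disjointFr disj_ij xAi) in xAj.
Qed.

Section Factorization.

Context {R : realDomainType} {X Y : finType}.

(* Bounding both squared row norms by c, rather than their product, makes the
   bound additive under sums of matrices; it still yields gamma_2 A <= c. *)
Definition factorizes (A : X -> Y -> R) (c : R) : Prop :=
  exists (I : finType) (u : X -> I -> R) (v : Y -> I -> R),
    [/\ forall x y, \sum_i u x i * v y i = A x y,
        forall x, \sum_i u x i ^+ 2 <= c
      & forall y, \sum_i v y i ^+ 2 <= c].

Lemma eq_factorizes A A' c : factorizes A c -> A =2 A' -> factorizes A' c.
Proof.
by move=> [I [u [v [uvA hu hv]]]] eqA; exists I, u, v; split=> // x y; rewrite uvA eqA.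
Qed.

Lemma factorizes_le A c c' : c <= c' -> factorizes A c -> factorizes A c'.
Proof.
move=> le_c [I [u [v [uvA hu hv]]]]; exists I, u, v.
by split=> // [x | y]; apply: le_trans le_c.
Qed.

Lemma factorizes0 : factorizes (fun _ _ => 0) 0.
Proof.
by exists 'I_1, (fun _ _ => 0), (fun _ _ => 0); split=> *; rewrite big_ord1 ?mulr0 ?expr0n.
Qed.

Lemma factorizes1 : factorizes (fun _ _ => 1) 1.
Proof.
by exists 'I_1, (fun _ _ => 1), (fun _ _ => 1); split=> *; rewrite big_ord1 ?mulr1 ?expr1n.
Qed.

Lemma factorizesN A c : factorizes A c -> factorizes (fun x y => - A x y) c.
Proof.
move=> [I [u [v [uvA hu hv]]]]; exists I, (fun x i => - u x i), v; split=> //.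
- by move=> x y; rewrite -uvA -sumrN; apply: eq_bigr => i _; rewrite mulNr.
- by move=> x; under eq_bigr do rewrite sqrrN.
Qed.

Lemma factorizesD A B c c' :
  factorizes A c -> factorizes B c' -> factorizes (fun x y => A x y + B x y) (c + c').
Proof.
move=> [I [u [v [uvA hu hv]]]] [J [u' [v' [uvB hu' hv']]]].
pose cat (f : I -> R) (g : J -> R) k := match k with inl i => f i | inr j => g j end.
exists (I + J)%type, (fun x => cat (u x) (u' x)), (fun y => cat (v y) (v' y)).
by split=> *; rewrite big_sumType /= ?uvA ?uvB ?lerD.
Qed.

Lemma factorizesM A B c c' :
  factorizes A c -> factorizes B c' -> factorizes (fun x y => A x y * B x y) (c * c').
Proof.
move=> [I [u [v [uvA hu hv]]]] [J [u' [v' [uvB hu' hv']]]].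
exists (I * J)%type, (fun x k => u x k.1 * u' x k.2), (fun y k => v y k.1 * v' y k.2).
have sumsq_ge0 (K : finType) (f : K -> R) : 0 <= \sum_k f k ^+ 2.
  by apply: sumr_ge0 => k _; apply: sqr_ge0.
split=> [x y | x | y].
- rewrite -uvA -uvB -sum_pair_mul; apply: eq_bigr => k _; exact: mulrACA.
- under eq_bigr do rewrite exprMn.
  by rewrite (sum_pair_mul (fun i => u x i ^+ 2) (fun j => u' x j ^+ 2)) ler_pM ?sumsq_ge0.
- under eq_bigr do rewrite exprMn.
  by rewrite (sum_pair_mul (fun i => v y i ^+ 2) (fun j => v' y j ^+ 2)) ler_pM ?sumsq_ge0.
Qed.

Lemma factorizes_sum (T : finType) (P : pred T) (f : T -> X -> Y -> R) (c : T -> R) :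
  (forall t, P t -> factorizes (f t) (c t)) ->
  factorizes (fun x y => \sum_(t | P t) f t x y) (\sum_(t | P t) c t).
Proof.
move=> hf; elim: (index_enum T) => [|t s IH].
  by rewrite big_nil; apply: (eq_factorizes factorizes0) => x y; rewrite big_nil.
rewrite big_cons; case: ifP => Pt.
  by apply: (eq_factorizes (factorizesD (hf t Pt) IH)) => x y; rewrite big_cons Pt.
by apply: (eq_factorizes IH) => x y; rewrite big_cons Pt.
Qed.

Lemma factorizes_prod (T : finType) (f : T -> X -> Y -> R) (c : T -> R) :
  (forall t, factorizes (f t) (c t)) ->
  factorizes (fun x y => \prod_t f t x y) (\prod_t c t).
Proof.
move=> hf; elim: (index_enum T) => [|t s IH].
  by rewrite big_nil; apply: (eq_factorizes factorizes1) => x y; rewrite big_nil.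
rewrite big_cons; apply: (eq_factorizes (factorizesM (hf t) IH)) => x y.
by rewrite big_cons.
Qed.

Lemma factorizes_blocky (F : X -> Y -> bool) :
  blocky F -> factorizes (fun x y => (F x y : nat)%:R) 1.
Proof.
move=> [k [Xs [Ys [disjX [disjY defF]]]]].
have uniqX := disjoint_family_unique disjX; have uniqY := disjoint_family_unique disjY.
have sq_bool (b : bool) : (b : nat)%:R ^+ 2 = (b : nat)%:R :> R.
  by case: b; rewrite ?expr1n ?expr0n.
have bool_le1 (b : bool) : (b : nat)%:R <= 1 :> R by case: b; rewrite ?ler01.
exists 'I_k, (fun x i => (x \in Xs i : nat)%:R), (fun y i => (y \in Ys i : nat)%:R).
split=> [x y | x | y].
- rewrite defF -(@sum_indicator_unique _ _ (fun i => (x \in Xs i) && (y \in Ys i))).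
    by apply: eq_bigr => i _; rewrite -natrM -[in RHS]mulnb.
  by move=> i j /andP[xi _] /andP[xj _]; apply: uniqX xi xj.
- by under eq_bigr do rewrite sq_bool; rewrite sum_indicator_unique ?bool_le1 //; apply: uniqX.
- by under eq_bigr do rewrite sq_bool; rewrite sum_indicator_unique ?bool_le1 //; apply: uniqY.
Qed.

Lemma factorizes_literal (F : X -> Y -> bool) (b : bool) : blocky F ->
  factorizes (fun x y => if b then (F x y : nat)%:R else 1 - (F x y : nat)%:R)
             (if b then 1 else 2).
Proof.
move=> /factorizes_blocky blockyF; case: b => //.
exact: factorizesD factorizes1 (factorizesN blockyF).
Qed.

End Factorization.

Lemma inf_le_nonneg (R : realType) (S : set R) (c : R) : 0 <= c -> S c -> inf S <= c.
Proof.
move=> c_ge0 Sc; have [lbS | no_lbS] := pselect (has_lbound S); first exact: ge_inf.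
by rewrite inf_out // => -[_ lbS].
Qed.

Lemma dotv_row_enum (R : realType) (I : finType) (f g : I -> R) :
  dotv (\row_(j < #|{: I}|) f (enum_val j)) (\row_(j < #|{: I}|) g (enum_val j))
    = \sum_i f i * g i.
Proof.
rewrite /dotv; under eq_bigr do rewrite !mxE.
by rewrite -(big_enum_val (fun i => f i * g i)).
Qed.

Lemma gamma2_le (R : realType) (X Y : finType) (A : X -> Y -> R) (c : R) :
  0 <= c -> factorizes A c -> gamma2 A <= c.
Proof.
move=> c_ge0 [I [u [v [uvA hu hv]]]]; apply: (inf_le_nonneg c_ge0).
pose pad (f : I -> R) (k : I + 'I_1) := if k is inl i then f i else 0.
pose row (f : I -> R) := \row_(j < #|{: I + 'I_1}|) pad f (enum_val j).
have pad_sum (f g : I -> R) : \sum_k pad f k * pad g k = \sum_i f i * g i.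
  by rewrite big_sumType /= big_ord1 mulr0 addr0.
have sq_le (f : I -> R) : \sum_i f i ^+ 2 <= c -> norm2 (row f) <= Num.sqrt c.
  by move=> le_c; rewrite /norm2 dotv_row_enum pad_sum ler_wsqrtr.
exists #|{: I + 'I_1}|, (fun x => row (u x)), (fun y => row (v y)).
split; first by rewrite card_sum card_ord addn1.
split=> [x y | x y]; first by rewrite dotv_row_enum pad_sum uvA.
by rewrite -(sqr_sqrtr c_ge0) expr2 ler_pM ?sqrtr_ge0 ?sq_le.
Qed.

Theorem proposition3p5 (R : realType) (X Y : finType) (r : nat)
  (B : 'I_r -> X -> Y -> bool) (Gamma : {ffun 'I_r -> bool} -> bool) :
  (forall i, blocky (B i)) ->
  gamma2 (fun x y => ((Gamma [ffun i => B i x y]) : nat)%:R : R) <= 3 ^+ r.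
Proof.
move=> blockyB; apply: gamma2_le; first exact: exprn_ge0.
have hsum := factorizes_sum (R := R)
  (fun a (_ : Gamma a) => factorizes_prod (fun i => factorizes_literal (a i) (blockyB i))).
apply: (factorizes_le _ (eq_factorizes hsum _)) => [|x y].
- rewrite -[in leRHS](card_ord r) -(sum_prod_literal_cost R) [leRHS](bigID Gamma) /= lerDl.
  by apply: sumr_ge0 => a _; apply: prodr_ge0 => i _; case: (a i).
- by under eq_bigr do rewrite prod_literal_indicator; rewrite sum_indicator_eq.
Qed.
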